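(* Let $G$ be an arbitrary graph and let $B$ be a bipartite graph that is dispersable. Then $\mathrm{mbt}(G\Box B)\leq \mathrm{mbt}(G)+\Delta(B)$.
   Context: A book embedding of a graph $G$ consists of a linear ordering of $V(G)$ (the vertices placed on the spine) together with an assignment of each edge to one of a set of pages such that no two edges on the same page cross, i.e. there are no two edges $uv$, $xy$ on the same page with $u<x<v<y$ in the ordering. A book embedding is matching if on every page each vertex is incident with at most one edge of that page. The matching book thickness $\mathrm{mbt}(G)$ is the minimum number of pages over all matching book embeddings of $G$. $\Delta(G)$ denotes the maximum degree of $G$. A graph $G$ is dispersable if $\mathrm{mbt}(G)=\Delta(G)$. The Cartesian product $G\Box B$ has vertex set $V(G)\times V(B)$, with $(u_1,v_1)$ adjacent to $(u_2,v_2)$ iff either $u_1=u_2$ and $v_1v_2\in E(B)$, or $v_1=v_2$ and $u_1u_2\in E(G)$. *)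

From mathcomp Require Import all_boot.
Set Implicit Arguments. Unset Strict Implicit. Unset Printing Implicit Defensive.

Definition simple_graph (T : finType) (e : rel T) : Prop :=
  symmetric e /\ irreflexive e.

Definition maxdeg (T : finType) (e : rel T) : nat :=
  \max_(v : T) #|[set w | e v w]|.

Definition bipartite (T : finType) (e : rel T) : Prop :=
  exists f : T -> bool, forall u v, e u v -> f u != f v.

Definition cart_rel (T1 T2 : finType) (eG : rel T1) (eB : rel T2) : rel (T1 * T2) :=
  fun x y => ((x.1 == y.1) && eB x.2 y.2) || ((x.2 == y.2) && eG x.1 y.1).

(* A matching book embedding of (T, e) with k pages:
   pos is the linear ordering of the vertices along the spine (injective),
   pg assigns to each edge {u,v} a page pg u v = pg v u < k; no two edges
   on the same page cross, and on each page every vertex meets at most one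
   edge of that page. *)
Definition matching_book_embedding (T : finType) (e : rel T) (k : nat) : Prop :=
  exists (pos : T -> nat) (pg : T -> T -> nat),
    [/\ injective pos,
        (forall u v, e u v -> pg u v = pg v u /\ pg u v < k),
        (forall u v x y, e u v -> e x y -> pg u v = pg x y ->
            ~ [/\ pos u < pos x, pos x < pos v & pos v < pos y]) &
        (forall u v w, e u v -> e u w -> v != w -> pg u v <> pg u w)].

Definition is_mbt (T : finType) (e : rel T) (m : nat) : Prop :=
  matching_book_embedding e m /\
  (forall k, matching_book_embedding e k -> m <= k).

Definition dispersable (T : finType) (e : rel T) : Prop :=
  is_mbt e (maxdeg e).

From mathcomp Require Import all_boot zify.
Set Implicit Arguments. Unset Strict Implicit. Unset Printing Implicit Defensive.

(* The copies G x {b} are laid out consecutively along the spine, in the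
   order in which the vertices b occur on the spine of B; the copy at b
   follows the spine order of G when b is on one side of the bipartition of
   B and the reversed order otherwise.  Every G-edge keeps its page, every
   B-edge of a copy B x {a} takes its page in B shifted past the pages of G.
   Two G-edges on a common page then lie in one copy of G, where they do not
   cross.  Two B-edges on a common page can only interleave if they project
   to the same edge bc of B; but the reversal between the copies at b and at
   c makes such parallel edges nest instead. *)

Definition matching_layout (T : finType) (e : rel T) (k : nat)
    (pos : T -> nat) (pg : T -> T -> nat) : Prop :=
  [/\ injective pos,
      (forall u v, e u v -> pg u v = pg v u /\ pg u v < k),
      (forall u v x y, e u v -> e x y -> pg u v = pg x y ->
          ~ [/\ pos u < pos x, pos x < pos v & pos v < pos y]) &
      (forall u v w, e u v -> e u w -> v != w -> pg u v <> pg u w)].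

Lemma lex_ltE (M a a' r r' : nat) : r <= M -> r' <= M ->
  (a * M.+1 + r < a' * M.+1 + r') = (a < a') || (a == a') && (r < r').
Proof.
move=> le_rM le_r'M; have [lt_aa'|lt_a'a|->] /= := ltngtP a a'.
- nia.
- nia.
- by rewrite ltn_add2l.
Qed.

Lemma lex_inj (M a a' r r' : nat) : r <= M -> r' <= M ->
  a * M.+1 + r = a' * M.+1 + r' -> a = a' /\ r = r'.
Proof.
move=> le_rM le_r'M E; have E' := congr1 (modn^~ M.+1) E.
move: E E'; rewrite /= !modnMDl !modn_small // => /[swap] <- /addIn/eqP.
by rewrite eqn_mul2r => /eqP.
Qed.

Lemma matching_layout_weak_cross (T : finType) (e : rel T) k pos pg b c b' c' :
  symmetric e -> irreflexive e -> matching_layout e k pos pg ->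
  e b c -> e b' c' -> pg b c = pg b' c' ->
  pos b <= pos b' -> pos b' <= pos c -> pos c <= pos c' -> b = b' /\ c = c'.
Proof.
move=> sym_e irr_e [inj_pos pg_edge no_cross matching] ebc eb'c' pg_eq le1 le2 le3.
have pos_neq x y : e x y -> pos x != pos y.
  by apply: contraTneq => /inj_pos ->; rewrite irr_e.
have [pbc pb'c'] := (pos_neq _ _ ebc, pos_neq _ _ eb'c').
have [eq_bb'|ne_bb'] := eqVneq b b'.
  split=> //; subst b'; apply/eqP/negPn/negP => ne_cc'.
  exact: (matching _ _ _ ebc eb'c' ne_cc' pg_eq).
exfalso; have pb_neq : pos b != pos b' by rewrite (inj_eq inj_pos).
have [eq_cc'|ne_cc'] := eqVneq c c'.
  subst c'; apply: (matching c b b'); rewrite ?(sym_e c) //.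
  by rewrite -(pg_edge _ _ ebc).1 -(pg_edge _ _ eb'c').1.
have [eq_b'c|ne_b'c] := eqVneq b' c.
  subst b'; apply: (matching c b c'); rewrite ?(sym_e c b) //.
    have : pos b != pos c' by lia.
    by apply: contraNneq => ->.
  by rewrite -(pg_edge _ _ ebc).1.
have pb'c : pos b' != pos c by rewrite (inj_eq inj_pos).
have pcc' : pos c != pos c' by rewrite (inj_eq inj_pos).
by apply: (no_cross _ _ _ _ ebc eb'c' pg_eq); split; lia.
Qed.

Lemma cart_edge_cases (TG TB : finType) (eG : rel TG) (eB : rel TB) a b a' b' :
  cart_rel eG eB (a, b) (a', b') -> (a = a' /\ eB b b') \/ (b = b' /\ eG a a').
Proof. by case/orP=> /andP[/eqP/= -> edge]; [left|right]. Qed.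

Section CartesianLayout.

Variables (TG TB : finType) (eG : rel TG) (eB : rel TB).
Hypotheses (symG : symmetric eG) (irrG : irreflexive eG).
Hypotheses (symB : symmetric eB) (irrB : irreflexive eB).
Variable side : TB -> bool.
Hypothesis side_proper : forall b c, eB b c -> side b != side c.
Variables (kG kB : nat) (posG : TG -> nat) (pgG : TG -> TG -> nat).
Variables (posB : TB -> nat) (pgB : TB -> TB -> nat).
Hypotheses (layoutG : matching_layout eG kG posG pgG)
           (layoutB : matching_layout eB kB posB pgB).

Let maxG := \max_(a : TG) posG a.

Definition layer_pos (x : TG * TB) : nat :=
  if side x.2 then posG x.1 else maxG - posG x.1.

Definition cart_pos (x : TG * TB) : nat := posB x.2 * maxG.+1 + layer_pos x.

Definition cart_page (x y : TG * TB) : nat :=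
  if x.1 == y.1 then kG + pgB x.2 y.2 else pgG x.1 y.1.

Lemma layer_pos_le x : layer_pos x <= maxG.
Proof. by rewrite /layer_pos; case: ifP => _; [apply: leq_bigmax | lia]. Qed.

Lemma layer_pos_ltE a a' b :
  (layer_pos (a, b) < layer_pos (a', b)) =
  if side b then posG a < posG a' else posG a' < posG a.
Proof.
have := leq_bigmax (F := posG) a; have := leq_bigmax (F := posG) a'.
by rewrite /layer_pos /=; case: side => // *; apply/idP/idP; lia.
Qed.

Lemma cart_pos_ltE x y : (cart_pos x < cart_pos y) =
  (posB x.2 < posB y.2) || (x.2 == y.2) && (layer_pos x < layer_pos y).
Proof.
case: layoutB => inj_posB _ _ _.
by rewrite lex_ltE ?layer_pos_le // (inj_eq inj_posB).
Qed.

Lemma cart_pos_layer_ltE a a' b :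
  (cart_pos (a, b) < cart_pos (a', b)) = (layer_pos (a, b) < layer_pos (a', b)).
Proof. by rewrite cart_pos_ltE ltnn eqxx. Qed.

Lemma cart_pos_lt_proj x y : cart_pos x < cart_pos y -> posB x.2 <= posB y.2.
Proof. by rewrite cart_pos_ltE => /orP[/ltnW | /andP[/eqP-> _]]. Qed.

Lemma cart_pos_inj : injective cart_pos.
Proof.
case: layoutG layoutB => inj_posG _ _ _ [inj_posB _ _ _].
move=> [a b] [a' b'] /lex_inj[||/inj_posB/= eq_b]; rewrite ?layer_pos_le //.
subst b'; have := leq_bigmax (F := posG) a; have := leq_bigmax (F := posG) a'.
rewrite /layer_pos /=; case: side => * ; congr pair; apply: inj_posG; lia.
Qed.

Lemma cart_page_B a b c : cart_page (a, b) (a, c) = kG + pgB b c.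
Proof. by rewrite /cart_page eqxx. Qed.

Lemma cart_page_G a a' b : eG a a' -> cart_page (a, b) (a', b) = pgG a a'.
Proof.
by move=> eaa'; rewrite /cart_page /=; case: eqP => // eq_a; rewrite eq_a irrG in eaa'.
Qed.

Lemma pgG_lt a a' : eG a a' -> pgG a a' < kG.
Proof. by case: layoutG => _ pg_edge _ _ /pg_edge[]. Qed.

Lemma cart_page_edge x y : cart_rel eG eB x y ->
  cart_page x y = cart_page y x /\ cart_page x y < kG + kB.
Proof.
case: layoutB => _ pgB_edge _ _; case: x y => [a b] [a' b'].
case/cart_edge_cases => [[<- ebb'] | [<- eaa']].
  by rewrite !cart_page_B ltn_add2l; have [-> ->] := pgB_edge _ _ ebb'.
have ea'a : eG a' a by rewrite symG.
rewrite !cart_page_G //; case: layoutG => _ pgG_edge _ _.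
by have [-> lt_pg] := pgG_edge _ _ eaa'; split=> //; lia.
Qed.

Lemma cart_no_cross_B a a' b c b' c' : eB b c -> eB b' c' -> pgB b c = pgB b' c' ->
  ~ [/\ cart_pos (a, b) < cart_pos (a', b'), cart_pos (a', b') < cart_pos (a, c)
      & cart_pos (a, c) < cart_pos (a', c')].
Proof.
move=> ebc eb'c' pg_eq [lt1 lt2 lt3].
have [eq_b eq_c] := matching_layout_weak_cross symB irrB layoutB ebc eb'c' pg_eq
  (cart_pos_lt_proj lt1) (cart_pos_lt_proj lt2) (cart_pos_lt_proj lt3).
subst b' c'.
move: lt1 lt3 (side_proper ebc); rewrite !cart_pos_layer_ltE !layer_pos_ltE.
by case: (side b); case: (side c) => //; lia.
Qed.

Lemma cart_no_cross_G a a' c c' b b' : eG a a' -> eG c c' -> pgG a a' = pgG c c' ->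
  ~ [/\ cart_pos (a, b) < cart_pos (c, b'), cart_pos (c, b') < cart_pos (a', b)
      & cart_pos (a', b) < cart_pos (c', b')].
Proof.
case: layoutG layoutB => _ pgG_edge no_crossG _ [inj_posB _ _ _].
move=> eaa' ecc' pg_eq [lt1 lt2 lt3].
have eq_b : b' = b.
  by apply: inj_posB; move: (cart_pos_lt_proj lt1) (cart_pos_lt_proj lt2) => /=; lia.
subst b'; move: lt1 lt2 lt3; rewrite !cart_pos_layer_ltE !layer_pos_ltE.
case: (side b) => lt1 lt2 lt3; first exact: (no_crossG _ _ _ _ eaa' ecc' pg_eq).
apply: (no_crossG c' c a' a); rewrite 1?symG //.
by rewrite -(pgG_edge _ _ ecc').1 -(pgG_edge _ _ eaa').1.
Qed.

Lemma cart_no_cross u v x y : cart_rel eG eB u v -> cart_rel eG eB x y ->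
  cart_page u v = cart_page x y ->
  ~ [/\ cart_pos u < cart_pos x, cart_pos x < cart_pos v & cart_pos v < cart_pos y].
Proof.
case: u v x y => [a b] [a' b'] [c d] [c' d'].
case/cart_edge_cases => [[<- ebb'] | [<- eaa']];
  case/cart_edge_cases => [[<- edd'] | [<- ecc']].
- by rewrite !cart_page_B => /addnI; apply: cart_no_cross_B.
- by rewrite cart_page_B cart_page_G //; have := pgG_lt ecc'; lia.
- by rewrite cart_page_B cart_page_G //; have := pgG_lt eaa'; lia.
- by rewrite !cart_page_G //; apply: cart_no_cross_G.
Qed.

Lemma cart_matching u v w : cart_rel eG eB u v -> cart_rel eG eB u w -> v != w ->
  cart_page u v <> cart_page u w.
Proof.
case: u v w => [a b] [a' b'] [a'' b''].
case/cart_edge_cases => [[<- ebb'] | [<- eaa']];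
  case/cart_edge_cases => [[<- ebb''] | [<- eaa'']] ne_vw.
- rewrite !cart_page_B => /addnI; case: layoutB => _ _ _; apply=> //.
  by apply: contraNneq ne_vw => ->.
- by rewrite cart_page_B cart_page_G //; have := pgG_lt eaa''; lia.
- by rewrite cart_page_B cart_page_G //; have := pgG_lt eaa'; lia.
- rewrite !cart_page_G //; case: layoutG => _ _ _; apply=> //.
  by apply: contraNneq ne_vw => ->.
Qed.

Lemma cart_matching_layout :
  matching_layout (cart_rel eG eB) (kG + kB) cart_pos cart_page.
Proof.
split; [exact: cart_pos_inj | exact: cart_page_edge | exact: cart_no_cross
       | exact: cart_matching].
Qed.

End CartesianLayout.

Lemma matching_book_embedding_cart (TG TB : finType) (eG : rel TG) (eB : rel TB) kG kB :
  simple_graph eG -> simple_graph eB -> bipartite eB ->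
  matching_book_embedding eG kG -> matching_book_embedding eB kB ->
  matching_book_embedding (cart_rel eG eB) (kG + kB).
Proof.
move=> [symG irrG] [symB irrB] [side side_proper].
move=> [posG [pgG layoutG]] [posB [pgB layoutB]].
eexists _, _.
exact: (cart_matching_layout symG irrG symB irrB side_proper layoutG layoutB).
Qed.

Theorem lemma2p5 (TG TB : finType) (eG : rel TG) (eB : rel TB)
  (mG mGB : nat) :
  simple_graph eG -> simple_graph eB ->
  bipartite eB -> dispersable eB ->
  is_mbt eG mG -> is_mbt (cart_rel eG eB) mGB ->
  mGB <= mG + maxdeg eB.
Proof.
move=> simpleG simpleB bipB [mbeB _] [mbeG _] [_ minGB].
by apply/minGB/matching_book_embedding_cart.
Qed.
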